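(* Let $G$ be a connected graph of order $n\ge 2$, and let $H$ be a graph of order $m\ge 1$. (a) If $n\ge 4$, then $O_{\rm SR}(G\odot H)=\mathcal{B}$. (b) If $n=3$, then $O_{\rm SR}(G\odot H)=\mathcal{N}$ if $m=1$ and $O_{\rm SR}(G\odot H)=\mathcal{B}$ if $m\ge 2$. (c) If $n=2$, then $O_{\rm SR}(G\odot H)=\mathcal{M}$ if $m=1$ and $O_{\rm SR}(G\odot H)=\mathcal{B}$ if $m\ge 2$.
   Context: All graphs are finite, simple and undirected. For graphs $G$ with $V(G)=\{u_1,\dots,u_n\}$ and $H$, the corona product $G\odot H$ is obtained from $G$ and $n$ disjoint copies $H_1,\dots,H_n$ of $H$ by adding an edge from $u_i$ to every vertex of $H_i$ for each $i$. A set $S\subseteq V(X)$ is a strong resolving set of a connected graph $X$ if for all distinct $x,y\in V(X)$ there exists $z\in S$ such that $x$ lies on a $y$–$z$ geodesic or $y$ lies on an $x$–$z$ geodesic. The Maker–Breaker strong resolving game on $X$: Maker and Breaker alternately select a not-yet-chosen vertex of $X$; Maker wins if the vertices he selects contain a strong resolving set of $X$, Breaker wins otherwise. In the M-game Maker moves first, in the B-game Breaker moves first. $O_{\rm SR}(X)=\mathcal{M}$ if Maker has a winning strategy in both games, $\mathcal{B}$ if Breaker has a winning strategy in both, and $\mathcal{N}$ if the first player has a winning strategy in each. *)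

From mathcomp Require Import all_boot.
Set Implicit Arguments. Unset Strict Implicit. Unset Printing Implicit Defensive.

Definition simple_graph (V : finType) (e : rel V) : Prop :=
  symmetric e /\ irreflexive e.

Definition connected_graph (V : finType) (e : rel V) : Prop :=
  forall x y : V, connect e x y.

(* Corona product G ⊙ H: vertices inl u (u in G) and inr (u, h) = vertex h of
   the copy H_u of H attached to u. *)
Definition corona_rel (T U : finType) (eG : rel T) (eH : rel U) : rel (T + (T * U)) :=
  fun a b =>
    match a, b with
    | inl u, inl v => eG u v
    | inl u, inr (v, _) => u == v
    | inr (u, _), inl v => u == v
    | inr (u, h), inr (v, h') => (u == v) && eH h h'
    end.

Fixpoint reach (V : finType) (e : rel V) (k : nat) (x y : V) : bool :=
  match k with
  | 0 => x == y
  | k'.+1 => (x == y) || [exists z, e x z && reach e k' z y]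
  end.

(* Shortest-path distance (the least k with a walk of length k; equals #|V|
   when y is unreachable, which does not occur in connected graphs). *)
Definition dist (V : finType) (e : rel V) (x y : V) : nat :=
  find (fun k => reach e k x y) (iota 0 #|V|).

Definition on_geodesic (V : finType) (e : rel V) (y z x : V) : bool :=
  dist e y x + dist e x z == dist e y z.

Definition strong_resolving (V : finType) (e : rel V) (S : {set V}) : bool :=
  [forall x, forall y, (x != y) ==>
     [exists z in S, on_geodesic e y z x || on_geodesic e x z y]].

(* M, B: vertices already chosen by Maker
   and Breaker; mturn: whether Maker is to move; fuel bounds the number of moves. *)
Definition maker_goal (V : finType) (e : rel V) (M : {set V}) : bool :=
  [exists S : {set V}, (S \subset M) && strong_resolving e S].

Fixpoint maker_wins_from (V : finType) (e : rel V) (fuel : nat)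
    (M B : {set V}) (mturn : bool) : bool :=
  let free := ~: (M :|: B) in
  match fuel with
  | 0 => maker_goal e M
  | fuel'.+1 =>
    if free == set0 then maker_goal e M
    else if mturn then [exists v in free, maker_wins_from e fuel' (v |: M) B false]
    else [forall v in free, maker_wins_from e fuel' M (v |: B) true]
  end.

Fixpoint breaker_wins_from (V : finType) (e : rel V) (fuel : nat)
    (M B : {set V}) (mturn : bool) : bool :=
  let free := ~: (M :|: B) in
  match fuel with
  | 0 => ~~ maker_goal e M
  | fuel'.+1 =>
    if free == set0 then ~~ maker_goal e M
    else if mturn then [forall v in free, breaker_wins_from e fuel' (v |: M) B false]
    else [exists v in free, breaker_wins_from e fuel' M (v |: B) true]
  end.

Definition maker_wins_Mgame (V : finType) (e : rel V) : bool :=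
  maker_wins_from e #|V| set0 set0 true.
Definition maker_wins_Bgame (V : finType) (e : rel V) : bool :=
  maker_wins_from e #|V| set0 set0 false.
Definition breaker_wins_Mgame (V : finType) (e : rel V) : bool :=
  breaker_wins_from e #|V| set0 set0 true.
Definition breaker_wins_Bgame (V : finType) (e : rel V) : bool :=
  breaker_wins_from e #|V| set0 set0 false.

Definition outcome_M (V : finType) (e : rel V) : Prop :=
  maker_wins_Mgame e /\ maker_wins_Bgame e.
Definition outcome_B (V : finType) (e : rel V) : Prop :=
  breaker_wins_Mgame e /\ breaker_wins_Bgame e.
Definition outcome_N (V : finType) (e : rel V) : Prop :=
  maker_wins_Mgame e /\ breaker_wins_Bgame e.

From mathcomp Require Import all_boot zify.
Set Implicit Arguments. Unset Strict Implicit. Unset Printing Implicit Defensive.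

(* Two vertices of G ⊙ H lying in different copies of H are mutually maximally
   distant: every path into the copy H_u enters through u, so a vertex of H_u lies
   on a geodesic starting outside H_u only if the geodesic ends there.  Hence
   every strong resolving set contains one of the two, and Breaker wins as soon
   as he owns both.  He can force this from a "fork": a copy vertex x together
   with two further copy vertices y1, y2 outside the copy of x; after claiming x
   he answers Maker's move with whichever of y1, y2 is still free.  A fork exists
   when n >= 3 or m >= 2, and one avoiding any prescribed vertex (Maker's opening
   move) exists when n >= 4, or when m >= 2.  When m = 1 the leaves of all copies
   but one already form a strong resolving set, which Maker can claim when n = 2
   (a single leaf, in either game) and when n = 3 (two leaves, moving first). *)

Section Walks.

Variables (V : finType) (e : rel V).

Lemma reachS k x y : reach e k x y -> reach e k.+1 x y.
Proof.
elim: k x => [|k IHk] x /=; first by move=> ->.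
case/orP=> [->//|/existsP[z /andP[xz zy]]].
by apply/orP; right; apply/existsP; exists z; rewrite xz; apply: IHk.
Qed.

Lemma reach_le k k' x y : k <= k' -> reach e k x y -> reach e k' x y.
Proof. by move/subnK <-; elim: (k' - k) => //= j IHj /IHj /reachS. Qed.

Lemma reach_refl k x : reach e k x x.
Proof. by case: k => /= [|k]; rewrite eqxx. Qed.

Lemma reach1 x y : e x y -> reach e 1 x y.
Proof. by move=> xy /=; apply/orP; right; apply/existsP; exists y; rewrite xy eqxx. Qed.

Lemma reach_trans k k' x y z :
  reach e k x y -> reach e k' y z -> reach e (k + k') x z.
Proof.
elim: k x => [/= x /eqP->//|k IHk x].
case/orP=> [/eqP-> yz|/existsP[w /andP[xw wy]] yz].
  by apply: reach_le yz; rewrite leq_addl.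
by rewrite addSn; apply/orP; right; apply/existsP; exists w; rewrite xw; apply: IHk.
Qed.

Lemma reach_sym : symmetric e -> forall k x y, reach e k x y -> reach e k y x.
Proof.
move=> sym_e; elim=> [|k IHk] x y; first by rewrite /= eq_sym.
case/orP=> [/eqP->|/existsP[w /andP[xw wy]]]; first exact: reach_refl.
by rewrite -addn1; apply: reach_trans (IHk _ _ wy) _; rewrite reach1 // sym_e.
Qed.

Lemma reach_path x p : path e x p -> reach e (size p) x (last x p).
Proof.
elim: p x => [|y p IHp] x /=; first by rewrite eqxx.
by case/andP=> xy py; apply/orP; right; apply/existsP; exists y; rewrite xy IHp.
Qed.

Lemma connect_reach x y : connect e x y -> exists2 k, k < #|V| & reach e k x y.
Proof.
case/connectP=> p /shortenP[q eq uq _] ->; exists (size q); last exact: reach_path.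
by rewrite -ltnS -[(size q).+1]/(size (x :: q)) -(card_uniqP uq) ltnS max_card.
Qed.

End Walks.

Section Distance.

Variables (V : finType) (e : rel V).
Hypothesis e_conn : connected_graph e.

Lemma has_reach x y : has (fun k => reach e k x y) (iota 0 #|V|).
Proof.
by have [k kV xy] := connect_reach (e_conn x y); apply/hasP; exists k; rewrite ?mem_iota.
Qed.

Lemma dist_lt_card x y : dist e x y < #|V|.
Proof. by rewrite -(size_iota 0 #|V|) -has_find has_reach. Qed.

Lemma dist_reach x y : reach e (dist e x y) x y.
Proof. by have := nth_find 0 (has_reach x y); rewrite nth_iota ?dist_lt_card. Qed.

Lemma dist_min k x y : reach e k x y -> dist e x y <= k.
Proof.
move=> xy; rewrite leqNgt; apply/negP=> lt_k_dist.
have := before_find 0 lt_k_dist.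
by rewrite nth_iota ?xy // (ltn_trans lt_k_dist) ?dist_lt_card.
Qed.

Lemma dist_triangle x y z : dist e x z <= dist e x y + dist e y z.
Proof. by apply: dist_min; apply: reach_trans; apply: dist_reach. Qed.

Lemma dist_sym : symmetric e -> forall x y, dist e x y = dist e y x.
Proof.
move=> sym_e x y; apply/eqP; rewrite eqn_leq.
by rewrite !dist_min // reach_sym // dist_reach.
Qed.

Lemma dist_eq0 x y : (dist e x y == 0) = (x == y).
Proof.
apply/idP/eqP=> [/eqP d0|->]; first by have := dist_reach x y; rewrite d0 => /eqP.
by rewrite -leqn0 dist_min // reach_refl.
Qed.

Lemma on_geodesic_end y z : on_geodesic e y z z.
Proof.
have /eqP d0 : dist e z z == 0 by rewrite dist_eq0.
by rewrite /on_geodesic d0 addn0.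
Qed.

Lemma on_geodesicC : symmetric e -> forall y z x,
  on_geodesic e y z x = on_geodesic e z y x.
Proof.
move=> sym_e y z x; rewrite /on_geodesic addnC.
by rewrite (dist_sym sym_e y x) (dist_sym sym_e x z) (dist_sym sym_e y z).
Qed.

End Distance.

Section Game.

Variables (V : finType) (e : rel V).

Definition sr_blocking_pair (x y : V) : Prop :=
  forall S, strong_resolving e S -> (x \in S) || (y \in S).

Definition sr_fork (x y1 y2 : V) : Prop :=
  [/\ y1 != y2, x != y1, x != y2, sr_blocking_pair x y1 & sr_blocking_pair x y2].

Definition sr_forks_avoiding : Prop :=
  forall v, exists x y1 y2, sr_fork x y1 y2 /\ [/\ x != v, y1 != v & y2 != v].

Lemma maker_goal_sr (S M : {set V}) :
  strong_resolving e S -> S \subset M -> maker_goal e M.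
Proof. by move=> srS sSM; apply/existsP; exists S; rewrite sSM srS. Qed.

Lemma maker_goalU v (M : {set V}) : maker_goal e M -> maker_goal e (v |: M).
Proof.
by case/existsP=> S /andP[sSM srS]; apply: maker_goal_sr srS (subset_trans sSM (subsetUr _ _)).
Qed.

Lemma maker_wins_goal f (M B : {set V}) mturn :
  maker_goal e M -> maker_wins_from e f M B mturn.
Proof.
elim: f M B mturn => [|f IHf] M B mturn goalM //=.
case: ifP => // /set0Pn[v free_v]; case: mturn.
  by apply/existsP; exists v; rewrite free_v IHf // maker_goalU.
by apply/forallP=> w; apply/implyP=> _; apply: IHf.
Qed.

Lemma breaker_wins_blocking x y f (M B : {set V}) mturn :
  sr_blocking_pair x y -> x \in B -> y \in B -> x \notin M -> y \notin M ->
  breaker_wins_from e f M B mturn.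
Proof.
move=> xy; have no_goal (M' : {set V}) : x \notin M' -> y \notin M' -> ~~ maker_goal e M'.
  move=> xM yM; apply/existsP=> -[S /andP[/subsetP sSM /xy]].
  by case/orP=> /sSM; apply/negP.
elim: f M B mturn => [|f IHf] M B mturn xB yB xM yM /=; first exact: no_goal.
case: ifP => [_|/set0Pn[w free_w]]; first exact: no_goal.
case: mturn; last by apply/existsP; exists w; rewrite free_w IHf // !inE ?xB ?yB orbT.
apply/forallP=> v; apply/implyP; rewrite !inE negb_or => /andP[vM vB].
by apply: IHf; rewrite // !inE negb_or ?xM ?yM andbT; apply: contraNneq vB => <-.
Qed.

Section Moves.

Variables (f : nat) (M B : {set V}).

Lemma maker_wins_move v : v \in ~: (M :|: B) ->
  maker_wins_from e f (v |: M) B false -> maker_wins_from e f.+1 M B true.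
Proof.
move=> free_v wins /=; have /negbTE-> : ~: (M :|: B) != set0 by apply/set0Pn; exists v.
by apply/existsP; exists v; rewrite free_v.
Qed.

Lemma maker_wins_reply : ~: (M :|: B) != set0 ->
  (forall v, v \in ~: (M :|: B) -> maker_wins_from e f M (v |: B) true) ->
  maker_wins_from e f.+1 M B false.
Proof. by move=> /negbTE /= -> wins; apply/forallP=> v; apply/implyP/wins. Qed.

Lemma breaker_wins_move v : v \in ~: (M :|: B) ->
  breaker_wins_from e f M (v |: B) true -> breaker_wins_from e f.+1 M B false.
Proof.
move=> free_v wins /=; have /negbTE-> : ~: (M :|: B) != set0 by apply/set0Pn; exists v.
by apply/existsP; exists v; rewrite free_v.
Qed.

Lemma breaker_wins_reply : ~: (M :|: B) != set0 ->
  (forall v, v \in ~: (M :|: B) -> breaker_wins_from e f (v |: M) B false) ->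
  breaker_wins_from e f.+1 M B true.
Proof. by move=> /negbTE /= -> wins; apply/forallP=> v; apply/implyP/wins. Qed.

End Moves.

Lemma breaker_wins_fork f (M B : {set V}) x y1 y2 :
  sr_fork x y1 y2 -> x \in B -> x \notin M ->
  y1 \in ~: (M :|: B) -> y2 \in ~: (M :|: B) -> breaker_wins_from e f.+2 M B true.
Proof.
case=> y12 _ _ xy1 xy2 xB xM free1 free2.
apply: breaker_wins_reply => [|v]; first by apply/set0Pn; exists y1.
rewrite !inE negb_or => /andP[vM vB].
have [y [yv xy free_y]] :
    exists y, [/\ y != v, sr_blocking_pair x y & y \in ~: (M :|: B)].
  by case: (eqVneq y1 v) => [<-|y1v]; [exists y2; rewrite eq_sym | exists y1].
move: free_y; rewrite !inE negb_or => /andP[yM yB].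
apply: (breaker_wins_move (v := y)); first by rewrite !inE !negb_or yv yM yB.
apply: (breaker_wins_blocking _ _ xy); rewrite !inE ?eqxx ?xB ?orbT ?negb_or ?xM ?yM ?yv //.
by rewrite andbT; apply: contraNneq vB => <-.
Qed.

Lemma breaker_wins_Bgame_of_fork x y1 y2 : sr_fork x y1 y2 -> breaker_wins_Bgame e.
Proof.
move=> fork; have [y12 xy1 xy2 _ _] := fork; rewrite /breaker_wins_Bgame.
have [k ->] : exists k, #|V| = k.+3.
  have : 2 < #|V| by apply/card_gt2P; exists x, y1, y2; rewrite xy1 y12 eq_sym xy2.
  by exists (#|V| - 3); lia.
apply: (breaker_wins_move (v := x)); first by rewrite !inE.
by apply: (breaker_wins_fork _ fork); rewrite !inE /= ?orbF ?eqxx // eq_sym.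
Qed.

Lemma breaker_wins_Mgame_of_forks_avoiding :
  3 < #|V| -> sr_forks_avoiding -> breaker_wins_Mgame e.
Proof.
move=> V4 forks; rewrite /breaker_wins_Mgame.
have [k ->] : exists k, #|V| = k.+4 by exists (#|V| - 4); lia.
have /card_gt0P[w _] : 0 < #|V| by lia.
apply: breaker_wins_reply => [|v _]; first by apply/set0Pn; exists w; rewrite !inE.
have [x [y1 [y2 [fork [xv y1v y2v]]]]] := forks v; have [_ xy1 xy2 _ _] := fork.
apply: (breaker_wins_move (v := x)); first by rewrite !inE /= !orbF.
by apply: (breaker_wins_fork _ fork); rewrite !inE /= ?orbF ?negb_or ?eqxx ?y1v ?y2v //= eq_sym.
Qed.

Lemma maker_wins_Mgame_of_sr_singleton a : strong_resolving e [set a] -> maker_wins_Mgame e.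
Proof.
move=> sra; rewrite /maker_wins_Mgame; have [k ->] : exists k, #|V| = k.+1.
  by exists #|V|.-1; rewrite prednK //; apply/card_gt0P; exists a.
apply: (maker_wins_move (v := a)); first by rewrite !inE.
by apply: maker_wins_goal; apply: (maker_goal_sr sra); rewrite sub1set !inE eqxx.
Qed.

Lemma maker_wins_Bgame_of_sr_singletons a b : a != b ->
  strong_resolving e [set a] -> strong_resolving e [set b] -> maker_wins_Bgame e.
Proof.
move=> ab sra srb; rewrite /maker_wins_Bgame.
have [k ->] : exists k, #|V| = k.+2.
  have : 1 < #|V| by apply/card_gt1P; exists a, b.
  by exists (#|V| - 2); lia.
apply: maker_wins_reply => [|v _]; first by apply/set0Pn; exists a; rewrite !inE.
have [w [wv srw]] : exists w, w != v /\ strong_resolving e [set w].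
  by case: (eqVneq a v) => [<-|av]; [exists b; rewrite eq_sym | exists a].
apply: (maker_wins_move (v := w)); first by rewrite !inE /= orbF.
by apply: maker_wins_goal; apply: (maker_goal_sr srw); rewrite sub1set !inE eqxx.
Qed.

Lemma maker_wins_Mgame_of_sr_pairs a b c : [/\ a != b, a != c & b != c] ->
  strong_resolving e [set a; b] -> strong_resolving e [set a; c] -> maker_wins_Mgame e.
Proof.
case=> ab ac bc srb src; rewrite /maker_wins_Mgame.
have [k ->] : exists k, #|V| = k.+3.
  have : 2 < #|V| by apply/card_gt2P; exists a, b, c; rewrite ab bc eq_sym ac.
  by exists (#|V| - 3); lia.
apply: (maker_wins_move (v := a)); first by rewrite !inE.
apply: maker_wins_reply => [|v]; first by apply/set0Pn; exists b; rewrite !inE /= !orbF eq_sym.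
rewrite !inE /= !orbF => va.
have [w [wv wa srw]] : exists w, [/\ w != v, w != a & strong_resolving e [set a; w]].
  by case: (eqVneq b v) => [<-|bv]; [exists c | exists b]; split; rewrite // eq_sym.
apply: (maker_wins_move (v := w)); first by rewrite !inE /= !orbF negb_or wa.
apply: maker_wins_goal; apply: (maker_goal_sr srw).
by apply/subsetP=> z; rewrite !inE => /orP[]->; rewrite ?orbT.
Qed.

End Game.

Section Corona.

Variables (T U : finType) (eG : rel T) (eH : rel U).
Hypotheses (eG_sym : symmetric eG) (eH_sym : symmetric eH) (eG_conn : connected_graph eG).

Local Notation e := (corona_rel eG eH).

Lemma corona_sym : symmetric e.
Proof.
by move=> [a|[a h]] [b|[b h']] //=; rewrite 1?eG_sym 1?eq_sym // eH_sym.
Qed.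

Lemma corona_connected : connected_graph e.
Proof.
have to_root w : exists u, connect e w (inl u) /\ connect e (inl u) w.
  by case: w => [u|[u h]]; exists u; split; rewrite ?connect0 // connect1 //= eqxx.
have roots u v : connect e (inl u) (inl v).
  case/connectP: (eG_conn u v) => p + ->; elim: p u => [|w p IHp] u /=.
    by rewrite connect0.
  by case/andP=> uw /IHp; apply: connect_trans; apply: connect1.
move=> x y; have [u [xu _]] := to_root x; have [v [_ vy]] := to_root y.
exact: connect_trans xu (connect_trans (roots u v) vy).
Qed.

Definition in_copy (u : T) (w : T + T * U) : bool :=
  if w is inr (v, _) then v == u else false.

Lemma corona_edge_into_copy u w z :
  ~~ in_copy u w -> in_copy u z -> e w z -> w = inl u.
Proof.
case: w => [a|[a h]]; case: z => [//|[b h']] /= wu /eqP bu; subst b; first by move/eqP->.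
by case/andP=> /eqP au; rewrite au eqxx in wu.
Qed.

Lemma reach_into_copy u h k w : ~~ in_copy u w ->
  reach e k.+1 w (inr (u, h)) -> reach e k w (inl u).
Proof.
elim: k w => [|k IHk] w wu /orP[/eqP wl|/existsP[z /andP[wz zl]]];
  try by rewrite wl /= eqxx in wu.
  by move/eqP: zl wz => -> /(corona_edge_into_copy wu); rewrite /= eqxx => /(_ isT) ->.
case: (boolP (in_copy u z)) => zu.
  by rewrite (corona_edge_into_copy wu zu wz) reach_refl.
by apply/orP; right; apply/existsP; exists z; rewrite wz; apply: IHk.
Qed.

Lemma dist_into_copy u h w : ~~ in_copy u w ->
  dist e w (inr (u, h)) = (dist e w (inl u)).+1.
Proof.
move=> wu; have e_conn := corona_connected; apply/eqP; rewrite eqn_leq; apply/andP; split.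
  rewrite -addn1; apply: leq_trans (dist_triangle e_conn _ (inl u) _) _.
  by rewrite leq_add2l dist_min // reach1 //= eqxx.
have := dist_reach e_conn w (inr (u, h)); case: (dist e w _) => [|k].
  by move/eqP=> wl; rewrite wl /= eqxx in wu.
by move/(reach_into_copy wu)/(dist_min e_conn).
Qed.

Lemma root_on_geodesic u h y : ~~ in_copy u y -> on_geodesic e y (inr (u, h)) (inl u).
Proof.
move=> yu; have /eqP uu : dist e (inl u) (inl u) == 0 by rewrite (dist_eq0 corona_connected).
by rewrite /on_geodesic !dist_into_copy // uu addn1.
Qed.

Lemma copy_vertex_off_geodesic u h y z : ~~ in_copy u y -> z != inr (u, h) ->
  ~~ on_geodesic e y z (inr (u, h)).
Proof.
move=> yu zl; have e_conn := corona_connected.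
rewrite /on_geodesic dist_into_copy //; case zu: (in_copy u z).
  case: z zl zu => [//|[v h']] zl /= /eqP vu; subst v.
  rewrite (dist_into_copy h' yu) addSn eqSS -{2}(addn0 (dist e y (inl u))) eqn_add2l.
  by rewrite (dist_eq0 e_conn) eq_sym.
rewrite (dist_sym e_conn corona_sym (inr _)) dist_into_copy ?zu // gtn_eqF //.
have := dist_triangle e_conn y (inl u) z; rewrite (dist_sym e_conn corona_sym (inl u)); lia.
Qed.

Lemma copy_vertex_neq a b h h' : a != b -> inr (a, h) != inr (b, h') :> T + T * U.
Proof. by apply: contraNneq => -[->]. Qed.

Lemma corona_blocking_pair u v h h' : u != v -> sr_blocking_pair e (inr (u, h)) (inr (v, h')).
Proof.
move=> uv S /forallP/(_ (inr (u, h)))/forallP/(_ (inr (v, h'))).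
rewrite copy_vertex_neq // => /existsP[z /andP[zS]].
case: (eqVneq z (inr (u, h))) => [<-|zx]; first by rewrite zS.
case: (eqVneq z (inr (v, h'))) => [<-|zy]; first by rewrite zS orbT.
rewrite (negbTE (copy_vertex_off_geodesic _ zx)) ?(negbTE (copy_vertex_off_geodesic _ zy)) //=.
by rewrite eq_sym.
Qed.

Lemma corona_fork a b b' h h1 h2 : a != b -> a != b' ->
  inr (b, h1) != inr (b', h2) :> T + T * U ->
  sr_fork e (inr (a, h)) (inr (b, h1)) (inr (b', h2)).
Proof.
by move=> ab ab' bb'; split=> //; apply: copy_vertex_neq || apply: corona_blocking_pair.
Qed.

Lemma corona_leaves_strong_resolving (h0 : U) (A : {set T}) :
  #|U| <= 1 -> 1 < #|T| -> #|~: A| <= 1 -> strong_resolving e [set inr (a, h0) | a in A].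
Proof.
move=> /fintype_le1P U1 T2 /card_le1_eqP A1; have e_conn := corona_connected.
set S := [set _ | _ in _].
have inS a : (inr (a, h0) \in S) = (a \in A) by rewrite mem_imset // => ? ? [].
have inA u w : u != w -> (u \in A) || (w \in A).
  move=> uw; apply: contraR uw; rewrite negb_or => /andP[uA wA].
  by apply/eqP; apply: A1; rewrite inE.
have other u : u \notin A -> exists2 a, a \in A & a != u.
  move=> uA; have /card_gt1P[x [y [_ _ xy]]] := T2.
  have [w wu] : exists w, w != u.
    by case: (eqVneq x u) => [<-|]; [exists y; rewrite eq_sym | exists x].
  by exists w => //; move: (inA _ _ wu); rewrite (negbTE uA) orbF.
have root_pair u y : y != inl u ->
    exists2 z, z \in S & on_geodesic e y z (inl u) || on_geodesic e (inl u) z y.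
  case: y => [w|[w h]] yu; last rewrite (U1 h0 h).
    have /inA/orP[uA|wA] : u != w by apply: contraNneq yu => ->.
      by exists (inr (u, h0)); rewrite ?inS ?root_on_geodesic.
    by exists (inr (w, h0)); rewrite ?inS ?root_on_geodesic ?orbT.
  case: (eqVneq w u) => [->|wu].
    case: (boolP (u \in A)) => uA.
      by exists (inr (u, h0)); rewrite ?inS ?on_geodesic_end ?orbT.
    have [a aA au] := other u uA.
    by exists (inr (a, h0)); rewrite ?inS // (on_geodesicC e_conn corona_sym) root_on_geodesic.
  have /inA/orP[uA|wA] : u != w by rewrite eq_sym.
    by exists (inr (u, h0)); rewrite ?inS ?root_on_geodesic.
  by exists (inr (w, h0)); rewrite ?inS ?on_geodesic_end ?orbT.
apply/forallP=> x; apply/forallP=> y; apply/implyP=> xy; apply/exists_inP.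
case: x xy => [u|[u h]] xy; first by apply: root_pair; rewrite eq_sym.
case: y xy => [w|[w h']] xy.
  by have [z zS] := root_pair w _ xy; exists z; rewrite // orbC.
move: xy; rewrite (U1 h0 h) (U1 h0 h') => xy.
have /inA/orP[uA|wA] : u != w by apply: contraNneq xy => ->.
  by exists (inr (u, h0)); rewrite ?inS ?on_geodesic_end ?orbT.
by exists (inr (w, h0)); rewrite ?inS ?on_geodesic_end ?orbT.
Qed.

Lemma exists_copies_avoiding (v : T + T * U) : exists r, forall c h, c != r -> inr (c, h) != v.
Proof. by case: v => [r|[r h']]; exists r => c h cr //; apply: copy_vertex_neq. Qed.

Lemma corona_forks_avoiding_of_big_copies : 1 < #|T| -> 1 < #|U| -> sr_forks_avoiding e.
Proof.
move=> /card_gt1P[a [b [_ _ ab]]] /card_gt1P[h1 [h2 [_ _ h12]]] v.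
have [r vr] := exists_copies_avoiding v.
have [p [q [pq qr]]] : exists p q, p != q /\ q != r.
  by case: (eqVneq a r) => [<-|ar]; [exists a, b | exists b, a]; split; rewrite // eq_sym.
have [h pv] : exists h, inr (p, h) != v.
  case: (eqVneq (inr (p, h1)) v) => [<-|]; last by exists h1.
  by exists h2; apply: contraNneq h12 => -[->].
exists (inr (p, h)), (inr (q, h1)), (inr (q, h2)); split; last by split=> //; apply: vr.
by apply: corona_fork => //; apply: contraNneq h12 => -[->].
Qed.

Lemma corona_forks_avoiding_of_four_copies : 3 < #|T| -> 0 < #|U| -> sr_forks_avoiding e.
Proof.
move=> T4 /card_gt0P[h0 _] v; have [r vr] := exists_copies_avoiding v.
have /card_gt2P[a [b [c [[ar br cr] [ab bc ca]]]]] : 2 < #|[set~ r]|.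
  by rewrite cardsC1; lia.
rewrite !in_setC1 in ar br cr.
exists (inr (a, h0)), (inr (b, h0)), (inr (c, h0)); split; last by split; rewrite ?vr.
by apply: corona_fork; rewrite ?copy_vertex_neq // eq_sym.
Qed.

Lemma card_corona : #|{: T + T * U}| = #|T| + #|T| * #|U|.
Proof. by rewrite card_sum card_prod. Qed.

Lemma corona_outcome_B_of_big_copies : 1 < #|T| -> 1 < #|U| -> outcome_B e.
Proof.
move=> T2 U2; have forks := corona_forks_avoiding_of_big_copies T2 U2.
split; first by apply: breaker_wins_Mgame_of_forks_avoiding forks; rewrite card_corona; nia.
have /card_gt1P[a _] := T2; have [x [y1 [y2 [fork _]]]] := forks (inl a).
exact: breaker_wins_Bgame_of_fork fork.
Qed.

Lemma corona_breaker_wins_Bgame_of_three_copies : 2 < #|T| -> 0 < #|U| -> breaker_wins_Bgame e.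
Proof.
move=> /card_gt2P[a [b [c [_ [ab bc ca]]]]] /card_gt0P[h0 _].
have ac : a != c by rewrite eq_sym.
exact: breaker_wins_Bgame_of_fork (corona_fork h0 ab ac (copy_vertex_neq h0 h0 bc)).
Qed.

Lemma corona_outcome_B_of_four_copies : 3 < #|T| -> 0 < #|U| -> outcome_B e.
Proof.
move=> T4 U1; split; last by apply: corona_breaker_wins_Bgame_of_three_copies; lia.
apply: breaker_wins_Mgame_of_forks_avoiding (corona_forks_avoiding_of_four_copies T4 U1).
by rewrite card_corona; nia.
Qed.

Lemma corona_maker_wins_Mgame_of_three_copies : #|T| = 3 -> #|U| = 1 -> maker_wins_Mgame e.
Proof.
move=> T3 U1; have [h0 _] := fintype1 U1.
have /card_gt2P[a [b [c [_ [ab bc ca]]]]] : 2 < #|T| by rewrite T3.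
have sr_pair p q : p != q -> strong_resolving e [set inr (p, h0); inr (q, h0)].
  move=> pq; rewrite -!(imset_set1 (fun x => inr (x, h0))) -imsetU.
  apply: corona_leaves_strong_resolving; rewrite ?U1 ?T3 //.
  by have := cardsC [set p; q]; rewrite cards2 pq T3; lia.
have ac : a != c by rewrite eq_sym.
apply: (maker_wins_Mgame_of_sr_pairs (a := inr (a, h0)) (b := inr (b, h0)) (c := inr (c, h0))).
- by split; apply: copy_vertex_neq.
- exact: sr_pair.
- exact: sr_pair.
Qed.

Lemma corona_outcome_M_of_two_copies : #|T| = 2 -> #|U| = 1 -> outcome_M e.
Proof.
move=> T2 U1; have [h0 _] := fintype1 U1.
have /card_gt1P[a [b [_ _ ab]]] : 1 < #|T| by rewrite T2.
have sr_leaf p : strong_resolving e [set inr (p, h0)].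
  rewrite -(imset_set1 (fun x => inr (x, h0))).
  by apply: corona_leaves_strong_resolving; rewrite ?U1 ?T2 ?cardsC1 ?T2.
split; first exact: maker_wins_Mgame_of_sr_singleton (sr_leaf a).
exact: maker_wins_Bgame_of_sr_singletons (copy_vertex_neq _ _ ab) (sr_leaf a) (sr_leaf b).
Qed.

End Corona.

Theorem mainTheorem9 (T U : finType) (eG : rel T) (eH : rel U)
  (sG : simple_graph eG) (sH : simple_graph eH) (cG : connected_graph eG)
  (hn : 2 <= #|T|) (hm : 1 <= #|U|) :
  (4 <= #|T| -> outcome_B (corona_rel eG eH)) /\
  (#|T| = 3 ->
     (#|U| = 1 -> outcome_N (corona_rel eG eH)) /\
     (2 <= #|U| -> outcome_B (corona_rel eG eH))) /\
  (#|T| = 2 ->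
     (#|U| = 1 -> outcome_M (corona_rel eG eH)) /\
     (2 <= #|U| -> outcome_B (corona_rel eG eH))).
Proof.
have [[eG_sym _] [eH_sym _]] := (sG, sH).
split; [|split].
- by move=> T4; apply: corona_outcome_B_of_four_copies.
- move=> T3; split=> [U1|U2]; last by apply: corona_outcome_B_of_big_copies; rewrite ?T3.
  split; first exact: corona_maker_wins_Mgame_of_three_copies.
  by apply: corona_breaker_wins_Bgame_of_three_copies; rewrite ?T3.
- move=> T2; split=> [U1|U2]; first exact: corona_outcome_M_of_two_copies.
  by apply: corona_outcome_B_of_big_copies; rewrite ?T2.
Qed.
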